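(* Let $\gamma>-1/2$ and for $a\in\mathbb{R}$ define \[ T(a)={}_1F_1(1+\gamma;2\gamma+1;-ia)\,{}_1F_1(2+\gamma;2\gamma+2;ia)(1+\gamma)-{}_1F_1(\gamma;2\gamma+1;-ia)\,{}_1F_1(1+\gamma;2\gamma+2;ia)\,\gamma . \] Then $T(a)\neq0$ for every $a\in\mathbb{R}$.
   Context: ${}_1F_1(\alpha;\beta;z)=\sum_{k\ge0}\frac{(\alpha)_k}{(\beta)_k}\frac{z^k}{k!}$ is the confluent hypergeometric function, with $(v)_k$ the rising factorial. *)

From Stdlib Require Import Reals.
From Coquelicot Require Import Coquelicot.
Open Scope R_scope.

Fixpoint rising (v : R) (k : nat) : R :=
  match k with
  | O => 1
  | S k' => rising v k' * (v + INR k')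
  end.

Definition CSeries (u : nat -> C) : C :=
  (Series (fun n => Re (u n)), Series (fun n => Im (u n))).

Definition hyp1F1_term (alpha beta : R) (z : C) (k : nat) : C :=
  Cmult (RtoC (rising alpha k / rising beta k / INR (Factorial.fact k))) (pow_n z k).

Definition hyp1F1 (alpha beta : R) (z : C) : C :=
  CSeries (hyp1F1_term alpha beta z).

Definition T_fun (g a : R) : C :=
  Cminus
    (Cmult (Cmult (hyp1F1 (1 + g) (2 * g + 1) (Cmult (RtoC (- a)) Ci))
                  (hyp1F1 (2 + g) (2 * g + 2) (Cmult (RtoC a) Ci)))
           (RtoC (1 + g)))
    (Cmult (Cmult (hyp1F1 g (2 * g + 1) (Cmult (RtoC (- a)) Ci))
                  (hyp1F1 (1 + g) (2 * g + 2) (Cmult (RtoC a) Ci)))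
           (RtoC g)).

From Stdlib Require Import Reals Lra Lia.
From Coquelicot Require Import Coquelicot.
Open Scope R_scope.

(* Put b = 2g + 1, x(t) = 1F1(g; b; i t) = X1 + i X2 and y(t) = 1F1(g+1; b+1; i t)
   = Y1 + i Y2.  The contiguous relations of 1F1 turn Re T(t) into F(t) - (t/b) C(t) with
     F = b |x|^2 - 2g Re(conj x * y),    C = 2b Im(conj x * y) - t |y|^2,
   and the differentiation formulas of 1F1 give the Euler-type equations
     t F' + b F = b |x|^2 >= 0,    t C' + b C = 0.
   Hence |t|^b F(t) is nondecreasing in |t| and |t|^b C(t) is constant on each half-line;
   as F and C are continuous at 0 with F(0) = 1 and C(0) = 0, we get C = 0 and Re T = F > 0. *)

Lemma CV_radius_infinite_dom (a d : nat -> R) :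
  (forall n, Rabs (a n) <= Rabs (d n)) -> CV_radius d = p_infty -> CV_radius a = p_infty.
Proof.
  intros Hd Hr.
  assert (H : forall r : posreal, Rbar_le r (CV_radius a)).
  { intros r. apply CV_radius_Reals_1.
    assert (Hl : Rbar_lt r (CV_radius d)) by (rewrite Hr; exact I).
    destruct (CV_radius_Reals_0 d r Hl) as [An [l [H1 H2]]].
    exists An, l. split; [exact H1|]. intros n y Hy.
    eapply Rle_trans; [|apply (H2 n y Hy)].
    rewrite !Rabs_mult. apply Rmult_le_compat_r; [apply Rabs_pos | apply Hd]. }
  destruct (CV_radius a) as [x| |] eqn:E.
  - exfalso. assert (Hp : 0 < Rabs x + 1) by (pose proof (Rabs_pos x); lra).
    specialize (H (mkposreal _ Hp)). simpl in H. pose proof (Rle_abs x). lra.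
  - reflexivity.
  - pose proof (CV_radius_ge_0 a) as H0. rewrite E in H0. contradiction.
Qed.

Lemma CV_radius_exp_series (K : R) :
  0 < K -> CV_radius (fun k => K ^ k / INR (Factorial.fact k)) = p_infty.
Proof.
  intros HK. apply CV_radius_infinite_DAlembert.
  - intros n. apply Rgt_not_eq, Rdiv_lt_0_compat; [apply pow_lt; lra | apply INR_fact_lt_0].
  - apply is_lim_seq_ext with (fun n => K / INR (S n)).
    + intros n. simpl pow. rewrite fact_simpl, mult_INR.
      assert (H1 := INR_fact_lt_0 n). assert (H2 : 0 < INR (S n)) by (apply lt_0_INR; lia).
      assert (H3 : 0 < K ^ n) by (apply pow_lt; lra).
      rewrite <- (Rabs_pos_eq (K / INR (S n))) by (apply Rlt_le, Rdiv_lt_0_compat; lra).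
      f_equal. field. repeat split; lra.
    + replace (Finite 0) with (Rbar_mult K 0) by (simpl; f_equal; ring).
      apply is_lim_seq_scal_l.
      replace (Finite 0) with (Rbar_inv p_infty) by reflexivity.
      apply is_lim_seq_inv; [|discriminate].
      apply (is_lim_seq_incr_1 INR p_infty), is_lim_seq_INR.
Qed.

Lemma PSeries_lincomb3 (u v1 v2 v3 : nat -> R) (c1 c2 c3 x : R) :
  CV_radius v1 = p_infty -> CV_radius v2 = p_infty -> CV_radius v3 = p_infty ->
  (forall k, u k = c1 * v1 k + c2 * v2 k + c3 * v3 k) ->
  PSeries u x = c1 * PSeries v1 x + c2 * PSeries v2 x + c3 * PSeries v3 x.
Proof.
  intros H1 H2 H3 Hu.
  assert (Hex : forall v, CV_radius v = p_infty -> ex_pseries v x)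
    by (intros v Hv; apply CV_radius_inside; rewrite Hv; exact I).
  assert (Hsc : forall c v, CV_radius v = p_infty -> ex_pseries (PS_scal c v) x)
    by (intros c v Hv; apply ex_pseries_scal; [apply Rmult_comm | auto]).
  rewrite (PSeries_ext u (PS_plus (PS_plus (PS_scal c1 v1) (PS_scal c2 v2)) (PS_scal c3 v3)))
    by exact Hu.
  rewrite !PSeries_plus, !PSeries_scal; auto using ex_pseries_plus.
Qed.

Lemma PSeries_lincomb2 (u v1 v2 : nat -> R) (c1 c2 x : R) :
  CV_radius v1 = p_infty -> CV_radius v2 = p_infty ->
  (forall k, u k = c1 * v1 k + c2 * v2 k) ->
  PSeries u x = c1 * PSeries v1 x + c2 * PSeries v2 x.
Proof.
  intros H1 H2 Hu.
  rewrite (PSeries_lincomb3 u v1 v2 v1 c1 c2 0 x) by (auto; intros k; rewrite Hu; ring).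
  ring.
Qed.

Lemma ex_derive_near_0_right (f : R -> R) (a eps : R) :
  ex_derive f 0 -> 0 < a -> 0 < eps -> exists t, 0 < t <= a /\ Rabs (f t - f 0) < eps.
Proof.
  intros Hf Ha Heps.
  assert (Hc : continuity_pt f 0)
    by (apply continuity_pt_filterlim, (ex_derive_continuous f); exact Hf).
  destruct (proj1 (continuity_pt_locally f 0) Hc (mkposreal _ Heps)) as [[d Hd] Hclose].
  exists (Rmin a (d / 2)).
  assert (Ht : 0 < Rmin a (d / 2)) by (apply Rmin_glb_lt; lra).
  split; [split; [exact Ht | apply Rmin_l]|].
  apply Hclose. unfold ball; simpl. unfold AbsRing_ball, abs, minus, plus, opp; simpl.
  rewrite Ropp_0, Rplus_0_r, Rabs_pos_eq by lra. pose proof (Rmin_r a (d / 2)). lra.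
Qed.

Lemma Rpower_weighted_mono (b : R) (f : R -> R) : 0 < b ->
  (forall t, ex_derive f t) ->
  (forall t, 0 < t -> t * Derive f t + b * f t >= 0) ->
  forall s t, 0 < s -> s <= t -> Rpower s b * f s <= Rpower t b * f t.
Proof.
  intros Hb Hf Hode s t Hs Hst.
  destruct (Req_dec s t) as [<-|Hne]; [lra|].
  set (h := fun u => Rpower u b * f u).
  set (dh := fun u => Rpower u (b - 1) * (u * Derive f u + b * f u)).
  assert (Hh : forall u, 0 < u -> is_derive h u (dh u)).
  { intros u Hu. unfold h, dh.
    assert (Hpow : is_derive (fun u => Rpower u b) u (b * Rpower u (b - 1)))
      by (apply is_derive_Reals, derivable_pt_lim_power, Hu).
    assert (Hsplit : Rpower u b = Rpower u (b - 1) * u).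
    { rewrite <- (Rpower_1 u) at 3 by exact Hu. rewrite <- Rpower_plus. f_equal. ring. }
    eapply is_derive_ext; [intros v; reflexivity|].
    replace (Rpower u (b - 1) * (u * Derive f u + b * f u))
      with (b * Rpower u (b - 1) * f u + Rpower u b * Derive f u) by (rewrite Hsplit; ring).
    apply (is_derive_mult _ _ _ _ _ Hpow (Derive_correct f u (Hf u)) Rmult_comm). }
  destruct (MVT_gen h s t dh) as [c [Hc Heq]].
  - intros x Hx. apply Hh. rewrite Rmin_left in Hx by lra. lra.
  - intros x Hx. rewrite Rmin_left in Hx by lra.
    apply continuity_pt_filterlim, (ex_derive_continuous h).
    eexists. apply Hh. lra.
  - rewrite Rmin_left, Rmax_right in Hc by lra.
    assert (Hdh : 0 <= dh c).
    { unfold dh. apply Rmult_le_pos; [left; apply exp_pos | apply Rge_le, Hode; lra]. }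
    unfold h in Heq. nra.
Qed.

Lemma euler_pos_right (b : R) (f : R -> R) : 0 < b ->
  (forall t, ex_derive f t) ->
  (forall t, 0 < t -> t * Derive f t + b * f t >= 0) ->
  0 < f 0 -> forall a, 0 < a -> 0 < f a.
Proof.
  intros Hb Hf Hode H0 a Ha.
  destruct (ex_derive_near_0_right f a (f 0) (Hf 0) Ha H0) as [s [[Hs Hsa] Hclose]].
  assert (Hfs : 0 < f s) by (apply Rabs_def2 in Hclose; lra).
  pose proof (Rpower_weighted_mono b f Hb Hf Hode s a Hs Hsa).
  assert (0 < Rpower s b) by apply exp_pos. assert (0 < Rpower a b) by apply exp_pos.
  nra.
Qed.

Lemma euler_zero_right (b : R) (f : R -> R) : 0 < b ->
  (forall t, ex_derive f t) ->
  (forall t, 0 < t -> t * Derive f t + b * f t = 0) ->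
  f 0 = 0 -> forall a, 0 < a -> f a = 0.
Proof.
  intros Hb Hf Hode H0 a Ha.
  destruct (Req_dec (f a) 0) as [E|Hne]; [exact E|exfalso].
  assert (Hfa : 0 < Rabs (f a)) by (apply Rabs_pos_lt, Hne).
  destruct (ex_derive_near_0_right f a _ (Hf 0) Ha Hfa) as [s [[Hs Hsa] Hclose]].
  rewrite H0, Rminus_0_r in Hclose.
  assert (Hconst : Rpower s b * f s = Rpower a b * f a).
  { apply Rle_antisym.
    - apply (Rpower_weighted_mono b f Hb Hf); [|exact Hs|exact Hsa].
      intros t Ht. rewrite Hode by exact Ht. lra.
    - cut (Rpower s b * - f s <= Rpower a b * - f a); [lra|].
      apply (Rpower_weighted_mono b (fun t => - f t) Hb); [| |exact Hs|exact Hsa].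
      + intros t. auto_derive. apply Hf.
      + intros t Ht. rewrite Derive_opp. pose proof (Hode t Ht). lra. }
  assert (Hps : 0 < Rpower s b) by apply exp_pos. assert (Hpa : 0 < Rpower a b) by apply exp_pos.
  assert (Hle : Rpower s b <= Rpower a b) by (apply Rle_Rpower_l; lra).
  apply (f_equal Rabs) in Hconst.
  rewrite !Rabs_mult, (Rabs_pos_eq (Rpower s b)), (Rabs_pos_eq (Rpower a b)) in Hconst by lra.
  pose proof (Rabs_pos (f s)). nra.
Qed.

Lemma is_derive_reflect (f : R -> R) (t : R) :
  ex_derive f (- t) -> is_derive (fun s => f (- s)) t (- Derive f (- t)).
Proof.
  intros Hf. auto_derive; [exact Hf | now rewrite <- Ropp_mult_distr_l, Rmult_1_l].
Qed.

Lemma euler_reflect (b : R) (f : R -> R) (t : R) : ex_derive f (- t) ->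
  t * Derive (fun s => f (- s)) t + b * f (- t) = - t * Derive f (- t) + b * f (- t).
Proof.
  intros Hf. rewrite (is_derive_unique (fun s : R => f (- s)) t _ (is_derive_reflect f t Hf)). ring.
Qed.

Lemma euler_pos (b : R) (f : R -> R) : 0 < b ->
  (forall t, ex_derive f t) ->
  (forall t, t * Derive f t + b * f t >= 0) ->
  0 < f 0 -> forall a, 0 < f a.
Proof.
  intros Hb Hf Hode H0 a.
  destruct (Rtotal_order a 0) as [Ha|[->|Ha]]; [|exact H0|now apply (euler_pos_right b f)].
  rewrite <- (Ropp_involutive a).
  apply (euler_pos_right b (fun s => f (- s))); [exact Hb| | |now rewrite Ropp_0|lra].
  - intros t. eexists. apply is_derive_reflect, Hf.
  - intros t _. rewrite euler_reflect by apply Hf. apply Hode.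
Qed.

Lemma euler_zero (b : R) (f : R -> R) : 0 < b ->
  (forall t, ex_derive f t) ->
  (forall t, t * Derive f t + b * f t = 0) ->
  forall a, f a = 0.
Proof.
  intros Hb Hf Hode a.
  assert (H0 : f 0 = 0) by (pose proof (Hode 0); nra).
  destruct (Rtotal_order a 0) as [Ha|[->|Ha]]; [|exact H0|now apply (euler_zero_right b f)].
  rewrite <- (Ropp_involutive a).
  apply (euler_zero_right b (fun s => f (- s))); [exact Hb| | |now rewrite Ropp_0|lra].
  - intros t. eexists. apply is_derive_reflect, Hf.
  - intros t _. rewrite euler_reflect by apply Hf. apply Hode.
Qed.

Lemma rising_pos (be : R) (k : nat) : 0 < be -> 0 < rising be k.
Proof.
  intros Hb. induction k as [|k IH]; simpl; [lra|].
  apply Rmult_lt_0_compat; [exact IH|]. pose proof (pos_INR k). lra.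
Qed.

Lemma rising_S (al : R) (k : nat) : rising al (S k) = al * rising (al + 1) k.
Proof.
  induction k as [|k IH]; [simpl; ring|].
  change (rising al (S (S k))) with (rising al (S k) * (al + INR (S k))).
  rewrite IH, S_INR. simpl. ring.
Qed.

Lemma rising_abs_le (al be : R) (k : nat) : 0 < be ->
  Rabs (rising al k) <= (Rabs al / be + 1) ^ k * rising be k.
Proof.
  intros Hb. set (K := Rabs al / be + 1).
  assert (HK : 0 <= Rabs al / be) by (apply Rdiv_le_0_compat; [apply Rabs_pos | lra]).
  induction k as [|k IH]; simpl; [rewrite Rabs_R1; lra|].
  rewrite Rabs_mult. pose proof (pos_INR k).
  assert (Hstep : Rabs (al + INR k) <= K * (be + INR k)).
  { eapply Rle_trans; [apply Rabs_triang|]. rewrite (Rabs_pos_eq (INR k)) by lra.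
    assert (E : K * (be + INR k) = Rabs al + Rabs al / be * INR k + be + INR k)
      by (unfold K; field; lra).
    rewrite E. assert (0 <= Rabs al / be * INR k) by (apply Rmult_le_pos; lra). lra. }
  replace (K * K ^ k * (rising be k * (be + INR k)))
    with ((K ^ k * rising be k) * (K * (be + INR k))) by ring.
  apply Rmult_le_compat; auto using Rabs_pos.
Qed.

Definition hyp_coef (al be : R) (k : nat) : R :=
  rising al k / rising be k / INR (Factorial.fact k).

Lemma hyp_coef_0 (al be : R) : hyp_coef al be 0 = 1.
Proof. unfold hyp_coef. simpl. field. Qed.

Lemma hyp_coef_abs_le (al be : R) (k : nat) : 0 < be ->
  Rabs (hyp_coef al be k) <= (Rabs al / be + 1) ^ k / INR (Factorial.fact k).
Proof.
  intros Hb. unfold hyp_coef.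
  pose proof (rising_pos be k Hb). pose proof (INR_fact_lt_0 k).
  unfold Rdiv. rewrite !Rabs_mult, !Rabs_inv, (Rabs_pos_eq (rising be k)), (Rabs_pos_eq (INR _)) by lra.
  apply Rmult_le_compat_r; [left; apply Rinv_0_lt_compat; lra|].
  apply (Rmult_le_reg_r (rising be k)); [lra|].
  rewrite Rmult_assoc, Rinv_l, Rmult_1_r by lra. apply rising_abs_le; lra.
Qed.

(* In the names below, [shiftij] refers to the parameters (al + i, be + j). *)
Section Contiguity.
Variables al be : R.
Hypothesis Hb : 0 < be.

Let rising_den_pos k : 0 < rising (be + 1) k.
Proof. apply rising_pos. lra. Qed.

Lemma hyp_coef_deriv (k : nat) :
  INR (S k) * hyp_coef al be (S k) = al / be * hyp_coef (al + 1) (be + 1) k.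
Proof.
  unfold hyp_coef. rewrite fact_simpl, mult_INR, !rising_S.
  pose proof (rising_den_pos k). pose proof (INR_fact_lt_0 k).
  assert (0 < INR (S k)) by (apply lt_0_INR; lia).
  field. repeat split; lra.
Qed.

Lemma hyp_coef_shift10 (k : nat) :
  hyp_coef (al + 1) be (S k) = hyp_coef al be (S k) + hyp_coef (al + 1) (be + 1) k / be.
Proof.
  unfold hyp_coef. rewrite fact_simpl, mult_INR, (rising_S al), (rising_S be).
  change (rising (al + 1) (S k)) with (rising (al + 1) k * (al + 1 + INR k)).
  pose proof (rising_den_pos k). pose proof (INR_fact_lt_0 k). pose proof (pos_INR k).
  rewrite S_INR. field. repeat split; lra.
Qed.

Lemma hyp_coef_euler (k : nat) :
  INR k * hyp_coef (al + 1) (be + 1) k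
  = be * hyp_coef al be k - be * hyp_coef (al + 1) (be + 1) k
    + PS_incr_1 (hyp_coef (al + 1) (be + 1)) k.
Proof.
  destruct k as [|k]; [rewrite !hyp_coef_0; cbn; ring|].
  simpl PS_incr_1. unfold hyp_coef. rewrite fact_simpl, mult_INR, (rising_S al), (rising_S be).
  change (rising (al + 1) (S k)) with (rising (al + 1) k * (al + 1 + INR k)).
  change (rising (be + 1) (S k)) with (rising (be + 1) k * (be + 1 + INR k)).
  pose proof (rising_den_pos k). pose proof (INR_fact_lt_0 k). pose proof (pos_INR k).
  rewrite S_INR. field. repeat split; lra.
Qed.

Lemma hyp_coef_shift21 (k : nat) :
  (al + 1) * hyp_coef (al + 2) (be + 1) k
  = be * hyp_coef al be k + (al + 1 - be) * hyp_coef (al + 1) (be + 1) k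
    + PS_incr_1 (hyp_coef (al + 1) (be + 1)) k.
Proof.
  assert (Hnum : (al + 1) * rising (al + 2) k = (al + 1 + INR k) * rising (al + 1) k).
  { replace (al + 2) with (al + 1 + 1) by ring. rewrite <- rising_S. simpl. ring. }
  replace ((al + 1) * hyp_coef (al + 2) (be + 1) k)
    with ((al + 1 + INR k) * hyp_coef (al + 1) (be + 1) k)
    by (unfold hyp_coef, Rdiv; rewrite <- !Rmult_assoc, Hnum; ring).
  pose proof (hyp_coef_euler k). lra.
Qed.

End Contiguity.

Fixpoint ipow_re (k : nat) : R := match k with O => 1 | S j => - ipow_im j end
with ipow_im (k : nat) : R := match k with O => 0 | S j => ipow_re j end.

Lemma ipow_abs_le (k : nat) : Rabs (ipow_re k) <= 1 /\ Rabs (ipow_im k) <= 1.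
Proof.
  induction k as [|k IH]; simpl.
  - rewrite Rabs_R1, Rabs_R0. lra.
  - rewrite Rabs_Ropp. tauto.
Qed.

Lemma ipow_parity (k : nat) :
  (-1) ^ k * ipow_re k = ipow_re k /\ (-1) ^ k * ipow_im k = - ipow_im k.
Proof.
  induction k as [|k [Hre Him]]; simpl; [split; ring|].
  split; [rewrite <- Ropp_mult_distr_r, Rmult_assoc, Him | rewrite Rmult_assoc, Hre]; ring.
Qed.

Lemma pow_n_real_Ci (a : R) (k : nat) :
  pow_n (Cmult (RtoC a) Ci) k = (a ^ k * ipow_re k, a ^ k * ipow_im k).
Proof.
  induction k as [|k IH]; simpl pow_n.
  - unfold one. simpl. unfold RtoC. f_equal; ring.
  - rewrite IH. change mult with Cmult. unfold Cmult, RtoC, Ci. simpl. f_equal; ring.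
Qed.

Definition re_coef (al be : R) (k : nat) : R := hyp_coef al be k * ipow_re k.
Definition im_coef (al be : R) (k : nat) : R := hyp_coef al be k * ipow_im k.

Definition hypRe (al be t : R) : R := PSeries (re_coef al be) t.
Definition hypIm (al be t : R) : R := PSeries (im_coef al be) t.

Lemma hyp1F1_real_Ci (al be a : R) :
  hyp1F1 al be (Cmult (RtoC a) Ci) = (hypRe al be a, hypIm al be a).
Proof.
  unfold hyp1F1, CSeries, hypRe, hypIm, PSeries.
  f_equal; apply Series_ext; intros k;
  unfold hyp1F1_term; rewrite pow_n_real_Ci; unfold re_coef, im_coef, hyp_coef, Cmult, RtoC;
  simpl; ring.
Qed.

Lemma CV_radius_hyp_coef_mul (al be : R) (s : nat -> R) : 0 < be ->
  (forall k, Rabs (s k) <= 1) -> CV_radius (fun k => hyp_coef al be k * s k) = p_infty.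
Proof.
  intros Hb Hs.
  apply CV_radius_infinite_dom with (fun k => (Rabs al / be + 1) ^ k / INR (Factorial.fact k)).
  - intros k. rewrite Rabs_mult, (Rabs_pos_eq (_ / _)).
    + pose proof (Rabs_pos (hyp_coef al be k)). pose proof (Rabs_pos (s k)).
      pose proof (hyp_coef_abs_le al be k Hb). pose proof (Hs k). nra.
    + apply Rdiv_le_0_compat; [apply pow_le | apply INR_fact_lt_0].
      pose proof (Rabs_pos al). assert (0 <= Rabs al / be) by (apply Rdiv_le_0_compat; lra). lra.
  - apply CV_radius_exp_series.
    pose proof (Rabs_pos al). assert (0 <= Rabs al / be) by (apply Rdiv_le_0_compat; lra). lra.
Qed.

Lemma CV_radius_re_coef (al be : R) : 0 < be -> CV_radius (re_coef al be) = p_infty.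
Proof. intros Hb. apply CV_radius_hyp_coef_mul; [exact Hb | apply ipow_abs_le]. Qed.

Lemma CV_radius_im_coef (al be : R) : 0 < be -> CV_radius (im_coef al be) = p_infty.
Proof. intros Hb. apply CV_radius_hyp_coef_mul; [exact Hb | apply ipow_abs_le]. Qed.

Lemma hypRe_0 (al be : R) : hypRe al be 0 = 1.
Proof. unfold hypRe. rewrite PSeries_0. unfold re_coef. rewrite hyp_coef_0. simpl. ring. Qed.

Lemma hypIm_0 (al be : R) : hypIm al be 0 = 0.
Proof. unfold hypIm. rewrite PSeries_0. unfold im_coef. rewrite hyp_coef_0. simpl. ring. Qed.

Lemma hypRe_opp (al be t : R) : hypRe al be (- t) = hypRe al be t.
Proof.
  unfold hypRe, PSeries. apply Series_ext. intros k. unfold re_coef.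
  replace ((- t) ^ k) with ((-1) ^ k * t ^ k) by (rewrite <- Rpow_mult_distr; f_equal; ring).
  rewrite <- (proj1 (ipow_parity k)) at 2. ring.
Qed.

Lemma hypIm_opp (al be t : R) : hypIm al be (- t) = - hypIm al be t.
Proof.
  unfold hypIm, PSeries. rewrite <- Series_opp. apply Series_ext. intros k. unfold im_coef.
  replace ((- t) ^ k) with ((-1) ^ k * t ^ k) by (rewrite <- Rpow_mult_distr; f_equal; ring).
  replace (hyp_coef al be k * ipow_im k * ((-1) ^ k * t ^ k))
    with (hyp_coef al be k * ((-1) ^ k * ipow_im k) * t ^ k) by ring.
  rewrite (proj2 (ipow_parity k)). ring.
Qed.

Section HypContiguity.
Variables al be : R.
Hypothesis Hb : 0 < be.

Let Hb1 : 0 < be + 1.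
Proof. lra. Qed.

Local Hint Resolve CV_radius_re_coef CV_radius_im_coef : core.
Local Hint Extern 1 (CV_radius (PS_incr_1 _) = _) => rewrite CV_radius_incr_1 : core.

Lemma is_derive_hypRe (t : R) :
  is_derive (hypRe al be) t (- (al / be) * hypIm (al + 1) (be + 1) t).
Proof.
  unfold hypRe, hypIm. rewrite <- PSeries_scal.
  replace (PSeries (PS_scal _ _) t) with (PSeries (PS_derive (re_coef al be)) t).
  - apply is_derive_PSeries. rewrite CV_radius_re_coef by exact Hb. exact I.
  - apply PSeries_ext. intros k. unfold PS_derive, PS_scal, re_coef, im_coef. simpl ipow_re.
    transitivity (- (INR (S k) * hyp_coef al be (S k)) * ipow_im k); [ring|].
    rewrite hyp_coef_deriv by exact Hb. cbn. ring.
Qed.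

Lemma is_derive_hypIm (t : R) :
  is_derive (hypIm al be) t (al / be * hypRe (al + 1) (be + 1) t).
Proof.
  unfold hypRe, hypIm. rewrite <- PSeries_scal.
  replace (PSeries (PS_scal _ _) t) with (PSeries (PS_derive (im_coef al be)) t).
  - apply is_derive_PSeries. rewrite CV_radius_im_coef by exact Hb. exact I.
  - apply PSeries_ext. intros k. unfold PS_derive, PS_scal, re_coef, im_coef. simpl ipow_im.
    transitivity ((INR (S k) * hyp_coef al be (S k)) * ipow_re k); [ring|].
    rewrite hyp_coef_deriv by exact Hb. cbn. ring.
Qed.

Lemma hypRe_shift10 (t : R) :
  hypRe (al + 1) be t = hypRe al be t - t / be * hypIm (al + 1) (be + 1) t.
Proof.
  unfold hypRe, hypIm.
  rewrite (PSeries_lincomb2 _ (re_coef al be) (PS_incr_1 (im_coef (al + 1) (be + 1))) 1 (- / be));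
    auto.
  - rewrite PSeries_incr_1. field. lra.
  - intros [|k]; unfold re_coef, im_coef; simpl PS_incr_1; simpl ipow_re.
    + rewrite !hyp_coef_0. cbn. ring.
    + rewrite hyp_coef_shift10 by exact Hb. field. lra.
Qed.

Lemma hypIm_shift10 (t : R) :
  hypIm (al + 1) be t = hypIm al be t + t / be * hypRe (al + 1) (be + 1) t.
Proof.
  unfold hypRe, hypIm.
  rewrite (PSeries_lincomb2 _ (im_coef al be) (PS_incr_1 (re_coef (al + 1) (be + 1))) 1 (/ be));
    auto.
  - rewrite PSeries_incr_1. field. lra.
  - intros [|k]; unfold re_coef, im_coef; simpl PS_incr_1; simpl ipow_im.
    + rewrite !hyp_coef_0. cbn. ring.
    + rewrite hyp_coef_shift10 by exact Hb. field. lra.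
Qed.

Lemma hypRe_shift21 (t : R) :
  (al + 1) * hypRe (al + 2) (be + 1) t
  = be * hypRe al be t + (al + 1 - be) * hypRe (al + 1) (be + 1) t - t * hypIm (al + 1) (be + 1) t.
Proof.
  unfold hypRe, hypIm. rewrite <- PSeries_scal.
  rewrite (PSeries_lincomb3 _ (re_coef al be) (re_coef (al + 1) (be + 1))
             (PS_incr_1 (im_coef (al + 1) (be + 1))) be (al + 1 - be) (-1)); auto.
  - rewrite PSeries_incr_1. ring.
  - intros k. unfold PS_scal, re_coef, im_coef. cbn -[hyp_coef ipow_re ipow_im PS_incr_1].
    rewrite <- Rmult_assoc, hyp_coef_shift21 by exact Hb.
    destruct k as [|k]; cbn; ring.
Qed.

Lemma hypIm_shift21 (t : R) :
  (al + 1) * hypIm (al + 2) (be + 1) t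
  = be * hypIm al be t + (al + 1 - be) * hypIm (al + 1) (be + 1) t + t * hypRe (al + 1) (be + 1) t.
Proof.
  unfold hypRe, hypIm. rewrite <- PSeries_scal.
  rewrite (PSeries_lincomb3 _ (im_coef al be) (im_coef (al + 1) (be + 1))
             (PS_incr_1 (re_coef (al + 1) (be + 1))) be (al + 1 - be) 1); auto.
  - rewrite PSeries_incr_1. ring.
  - intros k. unfold PS_scal, re_coef, im_coef. cbn -[hyp_coef ipow_re ipow_im PS_incr_1].
    rewrite <- Rmult_assoc, hyp_coef_shift21 by exact Hb.
    destruct k as [|k]; cbn; ring.
Qed.

Lemma hypRe_euler (t : R) :
  t * Derive (hypRe (al + 1) (be + 1)) t
  = be * hypRe al be t - be * hypRe (al + 1) (be + 1) t - t * hypIm (al + 1) (be + 1) t.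
Proof.
  unfold hypRe, hypIm. rewrite Derive_PSeries by (rewrite CV_radius_re_coef by exact Hb1; exact I).
  rewrite <- PSeries_incr_1.
  rewrite (PSeries_lincomb3 _ (re_coef al be) (re_coef (al + 1) (be + 1))
             (PS_incr_1 (im_coef (al + 1) (be + 1))) be (- be) (-1)); auto.
  - rewrite PSeries_incr_1. ring.
  - intros [|k]; simpl PS_incr_1; unfold PS_derive, re_coef, im_coef.
    + rewrite !hyp_coef_0. cbn. ring.
    + pose proof (hyp_coef_euler al be Hb (S k)) as E. simpl PS_incr_1 in E. simpl ipow_re.
      transitivity (- (INR (S k) * hyp_coef (al + 1) (be + 1) (S k)) * ipow_im k); [ring|].
      rewrite E. ring.
Qed.

Lemma hypIm_euler (t : R) :
  t * Derive (hypIm (al + 1) (be + 1)) t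
  = be * hypIm al be t - be * hypIm (al + 1) (be + 1) t + t * hypRe (al + 1) (be + 1) t.
Proof.
  unfold hypRe, hypIm. rewrite Derive_PSeries by (rewrite CV_radius_im_coef by exact Hb1; exact I).
  rewrite <- PSeries_incr_1.
  rewrite (PSeries_lincomb3 _ (im_coef al be) (im_coef (al + 1) (be + 1))
             (PS_incr_1 (re_coef (al + 1) (be + 1))) be (- be) 1); auto.
  - rewrite PSeries_incr_1. ring.
  - intros [|k]; simpl PS_incr_1; unfold PS_derive, re_coef, im_coef.
    + rewrite !hyp_coef_0. cbn. ring.
    + pose proof (hyp_coef_euler al be Hb (S k)) as E. simpl PS_incr_1 in E. simpl ipow_im.
      transitivity ((INR (S k) * hyp_coef (al + 1) (be + 1) (S k)) * ipow_re k); [ring|].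
      rewrite E. ring.
Qed.

End HypContiguity.

Section QuadraticForms.
Variables al be : R.
Hypothesis Hb : 0 < be.
Hypothesis Hbe : be = 2 * al + 1.

Local Notation X1 := (hypRe al be).
Local Notation X2 := (hypIm al be).
Local Notation Y1 := (hypRe (al + 1) (be + 1)).
Local Notation Y2 := (hypIm (al + 1) (be + 1)).

Definition Fquad (t : R) : R :=
  be * (X1 t ^ 2 + X2 t ^ 2) - 2 * al * (X1 t * Y1 t + X2 t * Y2 t).

Definition Cquad (t : R) : R :=
  2 * be * (X1 t * Y2 t - X2 t * Y1 t) - t * (Y1 t ^ 2 + Y2 t ^ 2).

Let Hb1 : 0 < be + 1.
Proof. lra. Qed.

Let Derive_X1 t : Derive (fun s : R => X1 s) t = - (al / be) * Y2 t.
Proof. exact (is_derive_unique _ _ _ (is_derive_hypRe al be Hb t)). Qed.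

Let Derive_X2 t : Derive (fun s : R => X2 s) t = al / be * Y1 t.
Proof. exact (is_derive_unique _ _ _ (is_derive_hypIm al be Hb t)). Qed.

Let ex_derive_all t :
  ex_derive X1 t /\ ex_derive X2 t /\ ex_derive Y1 t /\ ex_derive Y2 t.
Proof.
  split; [|split; [|split]]; eexists.
  - exact (is_derive_hypRe al be Hb t).
  - exact (is_derive_hypIm al be Hb t).
  - exact (is_derive_hypRe (al + 1) (be + 1) Hb1 t).
  - exact (is_derive_hypIm (al + 1) (be + 1) Hb1 t).
Qed.

Lemma is_derive_Fquad (t : R) :
  is_derive Fquad t
    (2 * al * (X2 t * Y1 t - X1 t * Y2 t)
     - 2 * al * (X1 t * Derive Y1 t + X2 t * Derive Y2 t)).
Proof.
  destruct (ex_derive_all t) as (H1 & H2 & H3 & H4).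
  unfold Fquad. auto_derive; [tauto|].
  change (fun x : R => Y1 x) with Y1. change (fun x : R => Y2 x) with Y2.
  rewrite Derive_X1, Derive_X2. field. lra.
Qed.

Lemma Fquad_euler (t : R) :
  t * Derive Fquad t + be * Fquad t = be * (X1 t ^ 2 + X2 t ^ 2).
Proof.
  rewrite (is_derive_unique _ _ _ (is_derive_Fquad t)).
  pose proof (hypRe_euler al be Hb t) as E1. pose proof (hypIm_euler al be Hb t) as E2.
  transitivity (t * (2 * al * (X2 t * Y1 t - X1 t * Y2 t))
    - 2 * al * (X1 t * (t * Derive Y1 t) + X2 t * (t * Derive Y2 t)) + be * Fquad t); [ring|].
  rewrite E1, E2. unfold Fquad. rewrite Hbe. ring.
Qed.

Lemma Fquad_pos (a : R) : 0 < Fquad a.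
Proof.
  apply (euler_pos be Fquad Hb).
  - intros t. eexists. apply is_derive_Fquad.
  - intros t. rewrite Fquad_euler.
    pose proof (pow2_ge_0 (X1 t)). pose proof (pow2_ge_0 (X2 t)). nra.
  - unfold Fquad. rewrite !hypRe_0, !hypIm_0. lra.
Qed.

Lemma is_derive_Cquad (t : R) :
  is_derive Cquad t
    (- (2 * al + 1) * (Y1 t ^ 2 + Y2 t ^ 2)
     + 2 * be * (X1 t * Derive Y2 t - X2 t * Derive Y1 t)
     - 2 * t * (Y1 t * Derive Y1 t + Y2 t * Derive Y2 t)).
Proof.
  destruct (ex_derive_all t) as (H1 & H2 & H3 & H4).
  unfold Cquad. auto_derive; [tauto|].
  change (fun x : R => Y1 x) with Y1. change (fun x : R => Y2 x) with Y2.
  rewrite Derive_X1, Derive_X2. field. lra.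
Qed.

Lemma Cquad_euler (t : R) : t * Derive Cquad t + be * Cquad t = 0.
Proof.
  rewrite (is_derive_unique _ _ _ (is_derive_Cquad t)).
  pose proof (hypRe_euler al be Hb t) as E1. pose proof (hypIm_euler al be Hb t) as E2.
  transitivity (- (2 * al + 1) * t * (Y1 t ^ 2 + Y2 t ^ 2)
    + 2 * be * (X1 t * (t * Derive Y2 t) - X2 t * (t * Derive Y1 t))
    - 2 * t * (Y1 t * (t * Derive Y1 t) + Y2 t * (t * Derive Y2 t)) + be * Cquad t); [ring|].
  rewrite E1, E2. unfold Cquad. rewrite Hbe. ring.
Qed.

Lemma Cquad_zero (a : R) : Cquad a = 0.
Proof.
  apply (euler_zero be Cquad Hb); [|exact Cquad_euler].
  intros t. eexists. apply is_derive_Cquad.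
Qed.

End QuadraticForms.

Lemma fst_T_fun (g a : R) : -1/2 < g ->
  fst (T_fun g a) = Fquad g (2 * g + 1) a - a / (2 * g + 1) * Cquad g (2 * g + 1) a.
Proof.
  intros hg. set (be := 2 * g + 1).
  assert (Hb : 0 < be) by (unfold be; lra).
  unfold T_fun.
  replace (1 + g) with (g + 1) by ring. replace (2 + g) with (g + 2) by ring.
  replace (2 * g + 2) with (be + 1) by (unfold be; ring). fold be.
  rewrite !hyp1F1_real_Ci, !hypRe_opp, !hypIm_opp.
  transitivity (hypRe (g + 1) be a * ((g + 1) * hypRe (g + 2) (be + 1) a)
    + hypIm (g + 1) be a * ((g + 1) * hypIm (g + 2) (be + 1) a)
    - g * (hypRe g be a * hypRe (g + 1) (be + 1) a + hypIm g be a * hypIm (g + 1) (be + 1) a));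
    [simpl; ring|].
  rewrite (hypRe_shift21 g be Hb), (hypIm_shift21 g be Hb), (hypRe_shift10 g be Hb), (hypIm_shift10 g be Hb).
  unfold Fquad, Cquad, be. field. lra.
Qed.

Theorem lemma2p3 (g : R) (hg : -1/2 < g) (a : R) : T_fun g a <> RtoC 0.
Proof.
  intros HT.
  assert (Hb : 0 < 2 * g + 1) by lra.
  pose proof (fst_T_fun g a hg) as HRe.
  rewrite HT, (Cquad_zero g (2 * g + 1) Hb eq_refl) in HRe. simpl in HRe.
  pose proof (Fquad_pos g (2 * g + 1) Hb eq_refl a). lra.
Qed.
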